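(* Let $\Omega$ be a finite set and let $p,q$ be probability distributions on $\Omega$. Let $X_1,X_2$ be drawn i.i.d. from $p$ and $\mathcal{S}=\{X_1,X_2\}$, and let $P^\star(\mathrm{acc})$ be the supremum of $\Pr(Z\in\mathcal{S})$ over all valid token-level selection rules with output $Z$. Then $P^\star(\mathrm{acc})=1$ if and only if $$\sum_{x\in\mathcal{A}}q(x)\ \ge\ \Big(\sum_{x\in\mathcal{A}}p(x)\Big)^2\qquad\text{for every subset }\mathcal{A}\subseteq\Omega.$$
   Context: A token-level selection rule is a conditional distribution $\mathcal{P}(\cdot\mid X_1,X_2)$ on $\Omega$; it is valid if its output $Z$ satisfies $\Pr(Z=z)=q(z)$ for all $z\in\Omega$, where $X_1,X_2$ are i.i.d. with law $p$. *)

From HB Require Import structures.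
From mathcomp Require Import all_boot all_order all_algebra.
From mathcomp Require Import classical_sets boolp reals.
Set Implicit Arguments. Unset Strict Implicit. Unset Printing Implicit Defensive.
Import Order.TTheory GRing.Theory Num.Theory.
Local Open Scope ring_scope.
Local Open Scope classical_set_scope.

Definition is_distr (R : realType) (Omega : finType) (p : Omega -> R) : Prop :=
  (forall x, 0 <= p x) /\ \sum_(x : Omega) p x = 1.

Definition selection_rule (R : realType) (Omega : finType)
    (P : Omega -> Omega -> Omega -> R) : Prop :=
  forall x1 x2, is_distr (P x1 x2).

Definition output_law (R : realType) (Omega : finType) (p : Omega -> R)
    (P : Omega -> Omega -> Omega -> R) (z : Omega) : R :=
  \sum_(x1 : Omega) \sum_(x2 : Omega) p x1 * p x2 * P x1 x2 z.

Definition valid_rule (R : realType) (Omega : finType) (p q : Omega -> R)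
    (P : Omega -> Omega -> Omega -> R) : Prop :=
  selection_rule P /\ forall z, output_law p P z = q z.

Definition acc_prob (R : realType) (Omega : finType) (p : Omega -> R)
    (P : Omega -> Omega -> Omega -> R) : R :=
  \sum_(x1 : Omega) \sum_(x2 : Omega)
     p x1 * p x2 * \sum_(z : Omega | (z == x1) || (z == x2)) P x1 x2 z.

Definition Pstar_acc (R : realType) (Omega : finType) (p q : Omega -> R) : R :=
  sup [set a | exists P, valid_rule p q P /\ a = acc_prob p P].

From mathcomp Require Import classical_sets reals.
From mathcomp Require Import all_boot all_order all_algebra lra.
Import Order.TTheory GRing.Theory Num.Theory.
Local Open Scope ring_scope.

(* If a valid rule accepts with probability at least 1 - e then, outside an
   event of probability e, the output lies in A whenever X1 and X2 both do;
   hence q(A) >= p(A)^2 - e.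
   Conversely, a rule accepting with probability 1 is a transport plan that
   ships the mass p(x1) p(x2) of each pair to its two elements so that every z
   receives q(z).  By the supply-demand (fractional Hall) theorem such a plan
   exists iff every A demands at most the mass of the pairs meeting A, that is
   q(A) <= 1 - p(~A)^2, which is the hypothesis for ~A; so the supremum is
   attained.  The supply-demand theorem is proved by induction on the number
   of edges: push as much mass as Hall's condition allows along one edge and
   delete it; uncrossing a tight set with the current one shows that Hall's
   condition survives. *)

Definition delta {R : nmodType} {T : eqType} (a : T) (t : R) (x : T) : R :=
  if x == a then t else 0.

Section FinSums.
Context {R : numDomainType}.

Lemma sum_setUI (T : finType) (A B : {set T}) (F : T -> R) :
  \sum_(x in A :|: B) F x + \sum_(x in A :&: B) F x =
  \sum_(x in A) F x + \sum_(x in B) F x.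
Proof.
rewrite [in LHS](big_setID A) setUK setDUl setDv set0U.
by rewrite [X in _ = _ + X](big_setID A) setIC addrAC addrA.
Qed.

Lemma sub_ler_sum {T : finType} {a b : pred T} {F : T -> R} :
  (forall x, 0 <= F x) -> (forall x, a x -> b x) ->
  \sum_(x | a x) F x <= \sum_(x | b x) F x.
Proof.
move=> F_ge0 ab; rewrite [leLHS]big_mkcond [leRHS]big_mkcond /=.
apply: ler_sum => x _; case: (boolP (a x)) => [/ab -> //|_].
by case: (b x).
Qed.

Lemma sum_delta (T : finType) (P : pred T) (a : T) (t : R) :
  \sum_(x | P x) delta a t x = if P a then t else 0.
Proof.
rewrite -big_mkcondr; case: (boolP (P a)) => Pa.
  by apply: (big_pred1 a) => x /=; case: (eqVneq x a) => [->|_]; rewrite ?Pa ?andbF.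
by rewrite big_pred0 // => x; case: (eqVneq x a) => [->|_]; rewrite ?(negbTE Pa) ?andbF.
Qed.

Lemma sqr_sum_set (T : finType) (A : {set T}) (F : T -> R) :
  (\sum_(x in A) F x) ^+ 2 =
  \sum_x1 \sum_x2 F x1 * F x2 * ((x1 \in A) && (x2 \in A))%:R.
Proof.
rewrite expr2 big_distrlr /= big_mkcond; apply: eq_bigr => x1 _.
case: (x1 \in A) => /=; last by rewrite big1 // => x2 _; rewrite mulr0.
by rewrite big_mkcond; apply: eq_bigr => x2 _; case: (x2 \in A); rewrite ?mulr1 ?mulr0.
Qed.

Lemma delta_pairl (T1 T2 : eqType) (a1 : T1) (a2 : T2) (t : R) x1 x2 :
  delta (a1, a2) t (x1, x2) = delta a1 (delta a2 t x2) x1.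
Proof. by rewrite /delta xpair_eqE; case: (x1 == a1); case: (x2 == a2). Qed.

Lemma delta_pairr (T1 T2 : eqType) (a1 : T1) (a2 : T2) (t : R) x1 x2 :
  delta (a1, a2) t (x1, x2) = delta a2 (delta a1 t x1) x2.
Proof. by rewrite /delta xpair_eqE; case: (x1 == a1); case: (x2 == a2). Qed.

Lemma sum_setC (T : finType) (A : {set T}) (F : T -> R) :
  \sum_(x in ~: A) F x = \sum_x F x - \sum_(x in A) F x.
Proof.
rewrite [in RHS](bigID (mem A)) /= addrAC subrr add0r.
by apply: eq_bigl => x; rewrite inE.
Qed.

End FinSums.

Section Transport.
Context {R : realFieldType} {I J : finType}.
Implicit Types (E : {set I * J}) (A B : {set I}) (d : I -> R) (s : J -> R).

Definition nbhd E A : {set J} := [set y | [exists x in A, (x, y) \in E]].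

Lemma nbhdP E A y : reflect (exists2 x, x \in A & (x, y) \in E) (y \in nbhd E A).
Proof.
rewrite inE; apply: (iffP existsP) => [[x /andP[xA xyE]]|[x xA xyE]]; exists x => //.
by rewrite xA.
Qed.

Lemma nbhdS E1 E2 A B : E1 \subset E2 -> A \subset B -> nbhd E1 A \subset nbhd E2 B.
Proof.
move=> /subsetP sE12 /subsetP sAB; apply/subsetP => y /nbhdP[x xA xyE].
by apply/nbhdP; exists x; [apply: sAB | apply: sE12].
Qed.

Lemma nbhd0 A : nbhd set0 A = set0.
Proof.
by apply/setP => y; rewrite in_set0; apply/negbTE/nbhdP => -[x _]; rewrite in_set0.
Qed.

Lemma nbhdU E A B : nbhd E (A :|: B) = nbhd E A :|: nbhd E B.
Proof.
apply/setP => y; rewrite in_setU; apply/nbhdP/orP => [[x]|[]/nbhdP[x xA xyE]].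
- by rewrite in_setU => /orP[xA|xB] xyE; [left|right]; apply/nbhdP; exists x.
- by exists x; rewrite // in_setU xA.
- by exists x; rewrite // in_setU xA orbT.
Qed.

Lemma nbhdD1 {E} B {i j} : (i, j) \in E ->
  nbhd E B = if i \in B then j |: nbhd (E :\ (i, j)) B else nbhd (E :\ (i, j)) B.
Proof.
move=> ijE; apply/setP => y.
have -> : (y \in nbhd E B) = (i \in B) && (y == j) || (y \in nbhd (E :\ (i, j)) B).
  apply/nbhdP/orP => [[x xB xyE]|[/andP[iB /eqP->]|/nbhdP[x xB]]].
  - case: (eqVneq (x, y) (i, j)) => [[<- <-]|neq]; first by left; rewrite xB eqxx.
    by right; apply/nbhdP; exists x; rewrite // in_setD1 neq.
  - by exists i.
  - by rewrite in_setD1 => /andP[_ xyE]; exists x.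
by case: (i \in B); rewrite ?in_setU1.
Qed.

Definition hall_cond E d s := forall A, \sum_(x in A) d x <= \sum_(y in nbhd E A) s y.

Definition slack E d s A := \sum_(y in nbhd E A) s y - \sum_(x in A) d x.

Definition is_flow E d s (phi : I -> J -> R) :=
  [/\ forall x y, 0 <= phi x y, forall x y, (x, y) \notin E -> phi x y = 0,
      forall x, \sum_y phi x y = d x & forall y, \sum_x phi x y = s y].

Lemma hall_sum_setUI {E d s A B} {N M : {set J}} :
  (forall y, 0 <= s y) -> hall_cond E d s ->
  nbhd E (A :|: B) \subset N :|: M -> nbhd E (A :&: B) \subset N :&: M ->
  \sum_(x in A) d x + \sum_(x in B) d x <= \sum_(y in N) s y + \sum_(y in M) s y.
Proof.
move=> s_ge0 hall sU sI; rewrite -[leLHS]sum_setUI -[leRHS]sum_setUI.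
apply: lerD; apply: le_trans (hall _) _; exact: sub_ler_sum s_ge0 (subsetP _).
Qed.

Lemma is_flow_set0 d s : (forall x, 0 <= d x) -> (forall y, 0 <= s y) ->
  \sum_x d x = \sum_y s y -> hall_cond set0 d s -> is_flow set0 d s (fun _ _ => 0).
Proof.
move=> d_ge0 s_ge0 d_s hall.
have d_sum0 : \sum_x d x = 0.
  apply/le_anti; rewrite sumr_ge0 // andbT.
  have := hall setT; rewrite nbhd0 big_set0.
  by rewrite (eq_bigl xpredT) // => x; rewrite inE.
have d0 x : d x = 0 by move/psumr_eq0P: d_sum0; apply.
have s0 y : s y = 0 by move: d_s; rewrite d_sum0 => /esym/psumr_eq0P; apply.
by split=> // [x|y]; rewrite big1 // ?d0 ?s0.
Qed.

Section PushEdge.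
Variables (E : {set I * J}) (d : I -> R) (s : J -> R) (i : I) (j : J) (t : R).
Hypotheses (s_ge0 : forall y, 0 <= s y) (hall : hall_cond E d s) (ijE : (i, j) \in E).
Hypothesis t_le_slack : forall A, i \notin A -> j \in nbhd E A -> t <= slack E d s A.
Hypothesis t_tight : [\/ t = d i, t = s j |
  exists2 A : {set I}, (i \notin A) && (j \in nbhd E A) & t = slack E d s A].

Let E' := E :\ (i, j).

Lemma push_bound_tight B : i \in B -> j \notin nbhd E' B ->
  \sum_(x in B) d x - t <= \sum_(y in nbhd E' B) s y.
Proof.
move=> iB jN'; have NB : nbhd E B = j |: nbhd E' B by rewrite (nbhdD1 _ ijE) iB.
case: t_tight => [->|->|[A /andP[iA jA] ->]].
- rewrite (big_setD1 i iB) addrC addKr; apply: le_trans (hall _) _.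
  apply: sub_ler_sum s_ge0 (subsetP _).
  rewrite (nbhdD1 _ ijE) in_setD1 eqxx /=.
  by apply: nbhdS; [exact: subxx | exact: subsetDl].
- by have := hall B; rewrite NB big_setU1 //=; lra.
- have jNA : [set j] \subset nbhd E A by rewrite sub1set.
  have sU : nbhd E (A :|: B) \subset nbhd E A :|: nbhd E' B.
    by rewrite nbhdU NB setUA (setUidPl jNA).
  have sI : nbhd E (A :&: B) \subset nbhd E A :&: nbhd E' B.
    rewrite subsetI nbhdS ?subxx ?subsetIl //= (nbhdD1 _ ijE) in_setI (negbTE iA) /=.
    by apply: nbhdS; [exact: subxx | exact: subsetIr].
  by have := hall_sum_setUI s_ge0 hall sU sI; rewrite /slack; lra.
Qed.

Lemma hall_cond_push : hall_cond E' (d \- delta i t) (s \- delta j t).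
Proof.
move=> B; rewrite !sumrB !sum_delta.
have := nbhdD1 B ijE; case: ifP => iB NB.
  case: (boolP (j \in nbhd E' B)) => jN'; last by rewrite subr0; exact: push_bound_tight.
  have jN'1 : [set j] \subset nbhd E' B by rewrite sub1set.
  by rewrite lerD2r -(setUidPr jN'1) -NB.
rewrite -NB subr0; case: (boolP (j \in nbhd E B)) => jN; last by rewrite subr0.
by have := t_le_slack B (negbT iB) jN; rewrite /slack; lra.
Qed.

Lemma is_flow_push phi : 0 <= t ->
  is_flow E' (d \- delta i t) (s \- delta j t) phi ->
  is_flow E d s (fun x y => phi x y + delta (i, j) t (x, y)).
Proof.
move=> t_ge0 [phi_ge0 phi_supp phi_row phi_col]; split.
- by move=> x y; rewrite addr_ge0 // /delta; case: ifP.
- move=> x y xyE; rewrite phi_supp ?in_setD1 ?(negbTE xyE) ?andbF // add0r /delta.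
  by case: (eqVneq (x, y) (i, j)) xyE => [->|]; rewrite ?ijE.
- move=> x; rewrite big_split /= phi_row.
  by under eq_bigr do rewrite delta_pairr; rewrite sum_delta /= subrK.
- move=> y; rewrite big_split /= phi_col.
  by under eq_bigr do rewrite delta_pairl; rewrite sum_delta /= subrK.
Qed.

End PushEdge.

Lemma exists_push_amount {E d s} i j :
  (forall x, 0 <= d x) -> (forall y, 0 <= s y) -> hall_cond E d s ->
  exists t, [/\ 0 <= t, t <= d i, t <= s j,
    forall A, i \notin A -> j \in nbhd E A -> t <= slack E d s A &
    [\/ t = d i, t = s j |
      exists2 A : {set I}, (i \notin A) && (j \in nbhd E A) & t = slack E d s A]].
Proof.
move=> d_ge0 s_ge0 hall.
pose t := \big[Order.min/Order.min (d i) (s j)]_(A : {set I} |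
  (i \notin A) && (j \in nbhd E A)) slack E d s A.
have : t <= Order.min (d i) (s j) by apply: bigmin_le_id.
rewrite le_min => /andP[t_di t_sj]; exists t; split=> //.
- apply: le_bigmin => [|A _]; first by rewrite le_min d_ge0 s_ge0.
  by rewrite subr_ge0.
- by move=> A iA jA; apply: bigmin_le_cond; rewrite iA jA.
- apply: (big_ind (fun x => [\/ x = d i, x = s j |
    exists2 A : {set I}, (i \notin A) && (j \in nbhd E A) & x = slack E d s A])).
  + by rewrite minEle; case: ifP => _; [apply: Or31 | apply: Or32].
  + by move=> x y Hx Hy; rewrite minEle; case: ifP.
  + by move=> A eA; apply: Or33; exists A.
Qed.

Theorem exists_flow {E d s} :
  (forall x, 0 <= d x) -> (forall y, 0 <= s y) -> \sum_x d x = \sum_y s y ->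
  hall_cond E d s -> exists phi, is_flow E d s phi.
Proof.
have [n ltEn] := ubnP #|E|; elim: n => // n IH in E d s ltEn *.
move=> d_ge0 s_ge0 d_s hall.
have [E0|[[i j] ijE]] := set_0Vmem E.
  by rewrite E0 in hall *; exists (fun _ _ => 0); exact: is_flow_set0.
have [t [t_ge0 t_di t_sj t_slack t_tight]] := exists_push_amount i j d_ge0 s_ge0 hall.
have [|||||phi phi_flow] := IH (E :\ (i, j)) (d \- delta i t) (s \- delta j t).
- by move: ltEn; rewrite (cardsD1 (i, j)) ijE.
- by move=> x; rewrite /= subr_ge0 /delta; case: eqP => [->|].
- by move=> y; rewrite /= subr_ge0 /delta; case: eqP => [->|].
- by rewrite !sumrB !sum_delta d_s.
- exact: hall_cond_push.
by exists (fun x y => phi x y + delta (i, j) t (x, y)); exact: is_flow_push.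
Qed.

End Transport.

Lemma distr_sum_le1 {R : realType} {T : finType} {f : T -> R} (a : pred T) :
  is_distr f -> \sum_(x | a x) f x <= 1.
Proof. by case=> f_ge0 <-; exact: sub_ler_sum. Qed.

Lemma indicator_sub_le_reject (R : realType) (T : finType) (f : T -> R)
    (A : {set T}) x1 x2 :
  is_distr f ->
  ((x1 \in A) && (x2 \in A))%:R - \sum_(z in A) f z <=
  1 - \sum_(z | (z == x1) || (z == x2)) f z.
Proof.
move=> f_distr; have acc_le1 := distr_sum_le1 [pred z | (z == x1) || (z == x2)] f_distr.
have fA_ge0 : 0 <= \sum_(z in A) f z by rewrite sumr_ge0 // => z _; exact: f_distr.1.
case: (boolP ((x1 \in A) && (x2 \in A))) => [/andP[x1A x2A]|_]; last first.
  by rewrite mulr0n; lra.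
have : \sum_(z | (z == x1) || (z == x2)) f z <= \sum_(z in A) f z.
  by apply: sub_ler_sum f_distr.1 _ => z /orP[] /eqP ->.
by rewrite mulr1n; lra.
Qed.

Definition pair_cover (T : finType) : {set T * (T * T)} :=
  [set e | (e.1 == e.2.1) || (e.1 == e.2.2)].

Lemma nbhd_pair_cover (T : finType) (A : {set T}) xx :
  (xx \in nbhd (pair_cover T) A) = (xx.1 \in A) || (xx.2 \in A).
Proof.
case: xx => x1 x2 /=; apply/nbhdP/orP => [[z zA]|[]xA].
- by rewrite inE /= => /orP[]/eqP <-; [left|right].
- by exists x1; rewrite // inE /= eqxx.
- by exists x2; rewrite // inE /= eqxx orbT.
Qed.

Section SelectionRules.
Context {R : realType} {Omega : finType} {p q : Omega -> R}.
Hypotheses (hp : is_distr p) (hq : is_distr q).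

Lemma sum_prod_distr : \sum_x1 \sum_x2 p x1 * p x2 = 1.
Proof. by rewrite -big_distrlr /= hp.2 mulr1. Qed.

Lemma acc_prob_le1 P : selection_rule P -> acc_prob p P <= 1.
Proof.
move=> selP; rewrite -sum_prod_distr; apply: ler_sum => x1 _; apply: ler_sum => x2 _.
by rewrite ler_piMr ?mulr_ge0 ?hp.1 //; exact: distr_sum_le1.
Qed.

Lemma valid_rule_indep : valid_rule p q (fun _ _ => q).
Proof.
split=> [x1 x2|z]; first exact: hq.
rewrite /output_law; under eq_bigr do rewrite -mulr_suml.
by rewrite -mulr_suml sum_prod_distr mul1r.
Qed.

Lemma has_sup_acc :
  has_sup [set a | exists P, valid_rule p q P /\ a = acc_prob p P]%classic.
Proof.
split; first by exists (acc_prob p (fun _ _ => q)), (fun _ _ => q); split=> //;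
  exact: valid_rule_indep.
by exists 1 => a [P [[selP _] ->]]; exact: acc_prob_le1.
Qed.

Lemma Pstar_acc_ge P : valid_rule p q P -> acc_prob p P <= Pstar_acc p q.
Proof. by move=> validP; apply: sup_upper_bound has_sup_acc _ _; exists P. Qed.

Lemma Pstar_acc_approx e : 0 < e ->
  exists2 P, valid_rule p q P & Pstar_acc p q - e < acc_prob p P.
Proof.
by move=> e_gt0; have [_ [P [validP ->]]] := sup_adherent e_gt0 has_sup_acc; exists P.
Qed.

Lemma Pstar_acc_le1 : Pstar_acc p q <= 1.
Proof.
apply: ge_sup; first by case: has_sup_acc.
by move=> a [P [[selP _] ->]]; exact: acc_prob_le1.
Qed.

Lemma sqr_sum_sub_le_reject P (A : {set Omega}) : valid_rule p q P ->
  (\sum_(x in A) p x) ^+ 2 - \sum_(x in A) q x <= 1 - acc_prob p P.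
Proof.
case=> selP lawP.
have -> : \sum_(z in A) q z = \sum_x1 \sum_x2 p x1 * p x2 * \sum_(z in A) P x1 x2 z.
  rewrite -(eq_bigr _ (fun z _ => lawP z)) /output_law exchange_big.
  apply: eq_bigr => x1 _.
  by rewrite exchange_big; apply: eq_bigr => x2 _; rewrite mulr_sumr.
rewrite sqr_sum_set -[X in _ <= X - _]sum_prod_distr /acc_prob -!sumrB.
apply: ler_sum => x1 _; rewrite -!sumrB; apply: ler_sum => x2 _.
rewrite -mulrBr -[X in _ <= X - _]mulr1 -mulrBr ler_wpM2l ?mulr_ge0 ?hp.1 //.
exact: indicator_sub_le_reject.
Qed.

Lemma hall_pair_cover :
  (forall A : {set Omega}, (\sum_(x in A) p x) ^+ 2 <= \sum_(x in A) q x) ->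
  hall_cond (pair_cover Omega) q (fun xx => p xx.1 * p xx.2).
Proof.
move=> sqr_le A; have := sqr_le (~: A); rewrite [X in _ <= X -> _]sum_setC hq.2.
have -> : (\sum_(x in ~: A) p x) ^+ 2 =
    1 - \sum_(xx in nbhd (pair_cover Omega) A) p xx.1 * p xx.2.
  rewrite -sum_prod_distr sqr_sum_set !pair_big /= [X in _ - X]big_mkcond -sumrB.
  apply: eq_bigr => xx _; rewrite nbhd_pair_cover !inE.
  by case: (xx.1 \in A); case: (xx.2 \in A); rewrite /= ?mulr1 ?mulr0 ?subr0 ?subrr.
lra.
Qed.

Section RuleOfFlow.
Variable phi : Omega -> Omega * Omega -> R.
Hypothesis phi_flow : is_flow (pair_cover Omega) q (fun xx => p xx.1 * p xx.2) phi.

Definition rule_of_flow x1 x2 z : R :=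
  if p x1 * p x2 == 0 then delta x1 1 z else phi z (x1, x2) / (p x1 * p x2).

Lemma rule_of_flow_selection : selection_rule rule_of_flow.
Proof.
have [phi_ge0 _ _ phi_col] := phi_flow.
move=> x1 x2; rewrite /rule_of_flow; case: eqP => pp0; split.
- by move=> z; rewrite /delta; case: ifP.
- by rewrite sum_delta.
- by move=> z; rewrite divr_ge0 ?mulr_ge0 ?hp.1.
- by rewrite -mulr_suml (phi_col (x1, x2)) divff //; apply/eqP.
Qed.

Lemma mass_rule_of_flow x1 x2 z : p x1 * p x2 * rule_of_flow x1 x2 z = phi z (x1, x2).
Proof.
have [phi_ge0 _ _ phi_col] := phi_flow.
rewrite /rule_of_flow; case: eqP => [pp0|/eqP pp_neq0]; last by rewrite mulrC divfK.
rewrite pp0 mul0r; have := phi_col (x1, x2); rewrite /= pp0.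
by move/psumr_eq0P => -> // y _; exact: phi_ge0.
Qed.

Lemma valid_rule_of_flow : valid_rule p q rule_of_flow.
Proof.
have [_ _ phi_row _] := phi_flow.
split=> [|z]; first exact: rule_of_flow_selection.
rewrite /output_law.
under eq_bigr => x1 _ do under eq_bigr => x2 _ do rewrite mass_rule_of_flow.
by rewrite pair_big /= -(phi_row z); apply: eq_bigr => -[].
Qed.

Lemma acc_prob_rule_of_flow : acc_prob p rule_of_flow = 1.
Proof.
have [_ phi_supp _ phi_col] := phi_flow.
rewrite -sum_prod_distr /acc_prob; apply: eq_bigr => x1 _; apply: eq_bigr => x2 _.
rewrite mulr_sumr -[RHS](phi_col (x1, x2)).
rewrite [RHS](bigID [pred z | (z == x1) || (z == x2)]) /=.
rewrite [X in _ = _ + X]big1 ?addr0 => [|z zx]; last by rewrite phi_supp // inE.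
by apply: eq_bigr => z _; rewrite mass_rule_of_flow.
Qed.

End RuleOfFlow.

Lemma exists_rule_accept1 :
  (forall A : {set Omega}, (\sum_(x in A) p x) ^+ 2 <= \sum_(x in A) q x) ->
  exists P, valid_rule p q P /\ acc_prob p P = 1.
Proof.
move=> sqr_le.
have s_ge0 (xx : Omega * Omega) : 0 <= p xx.1 * p xx.2 by rewrite mulr_ge0 ?hp.1.
have q_s : \sum_x q x = \sum_(xx : Omega * Omega) p xx.1 * p xx.2.
  by rewrite hq.2 -sum_prod_distr pair_big.
have [phi phi_flow] := exists_flow hq.1 s_ge0 q_s (hall_pair_cover sqr_le).
exists (rule_of_flow phi); split.
- exact: valid_rule_of_flow.
- exact: acc_prob_rule_of_flow.
Qed.

End SelectionRules.

Theorem theorem2 (R : realType) (Omega : finType) (p q : Omega -> R) :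
  is_distr p -> is_distr q ->
  (Pstar_acc p q = 1 <->
   forall A : {set Omega}, (\sum_(x in A) p x) ^+ 2 <= \sum_(x in A) q x).
Proof.
move=> hp hq; split=> [Pstar1 A | sqr_le].
- apply/ler_addgt0Pr => e e_gt0.
  have [P validP] := Pstar_acc_approx hp hq e e_gt0; rewrite Pstar1.
  have := sqr_sum_sub_le_reject hp P A validP; lra.
- have [P [validP accP]] := exists_rule_accept1 hp hq sqr_le.
  apply/le_anti; rewrite Pstar_acc_le1 // -accP.
  exact: Pstar_acc_ge.
Qed.
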